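(* Let $R$ be a localizable partially ordered commutative ring with $\mathbb{N}\subseteq\mathrm{Loc}(R)$. Then the kernel of the extended Gelfand transformation $\widehat{\cdot}\colon R\to\mathscr{C}_\approx(\mathcal{D}_{\mathrm{loc}}(R))$ is $\{r\in R:\ \text{there is } s\in R^+ \text{ such that } -s\le nr\le s \text{ for all } n\in\mathbb{N}\}$.
   Context: All rings are commutative with unit $1$; ring morphisms are unital. A partially ordered commutative ring is a commutative ring $R$ with a partial order $\le$ such that $r\le s$ implies $r+t\le s+t$, and whose positive cone $R^+=\{r:0\le r\}$ is closed under multiplication and contains all squares. $\mathbb{N}=\{1,2,\dots\}$, $\mathbb{N}_0=\mathbb{N}\cup\{0\}$. $\mathrm{Loc}(R)$ is the set of $s\in 1+R^+$ such that for all $r\in R$, $rs\in R^+$ implies $r\in R^+$; $R$ is localizable if for every $r$ there is $s\in\mathrm{Loc}(R)$ with $-s\le r\le s$. Admissible domains: for a topological space $Y$, a set $\mathcal{D}$ of open subsets with $Y\in\mathcal{D}$, closed under finite intersections. On $\bigcup_{A\in\mathcal{D}}\mathscr{C}(A)$, operations are pointwise on $\operatorname{dom}f\cap\operatorname{dom}g$; $f\approx g$ iff $f|_A=g|_A$ for some $A\in\mathcal{D}$, $A\subseteq\operatorname{dom}f\cap\operatorname{dom}g$; $\mathscr{C}_\approx(\mathcal{D})$ is the quotient ring. $R_{\mathrm{loc}}$: fractions $r/s$ ($r\in R$, $s\in\mathrm{Loc}(R)$), $r/s=r'/s'$ iff $rs'=r's$, usual operations, $p/q\le r/s$ iff $ps\le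 rq$. $R^{\mathrm{bd}}_{\mathrm{loc}}=\{a:\exists n\in\mathbb{N}_0,\ -n\le a\le n\}$. $\mathcal{K}(R)$: ring morphisms $\varphi\colon R^{\mathrm{bd}}_{\mathrm{loc}}\to\mathbb{R}$ with $\varphi(a)\ge0$ for $a\ge0$, weak-$*$ topology. $\mathrm{O}_{s<\infty}=\{\varphi:\varphi(1/s)>0\}$, $\mathcal{D}_{\mathrm{loc}}(R)=\{\mathrm{O}_{s<\infty}:s\in\mathrm{Loc}(R)\}$. The extended Gelfand transformation sends $r$ to the class $\widehat r$ of $r_s\colon\mathrm{O}_{s<\infty}\to\mathbb{R}$, $\varphi\mapsto\varphi(1/s)^{-1}\varphi(r/s)$, for any $s\in\mathrm{Loc}(R)$ with $r/s\in R^{\mathrm{bd}}_{\mathrm{loc}}$ (independent of $s$); it is a ring morphism. *)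

From Stdlib Require Import Reals.
From mathcomp Require Import all_boot all_order all_algebra.
Set Implicit Arguments. Unset Strict Implicit. Unset Printing Implicit Defensive.
Import GRing.Theory.

Section PO.
Variable A : comPzRingType.
Variable le : A -> A -> Prop.
Local Open Scope ring_scope.

Definition is_pocr : Prop :=
  (forall x, le x x) /\
  (forall x y, le x y -> le y x -> x = y) /\
  (forall x y z, le x y -> le y z -> le x z) /\
  (forall x y t, le x y -> le (x + t) (y + t)) /\
  (forall x y, le 0 x -> le 0 y -> le 0 (x * y)) /\
  (forall x, le 0 (x * x)).

Definition Loc (s : A) : Prop :=
  le 0 (s - 1) /\ (forall r, le 0 (r * s) -> le 0 r).

Definition localizable : Prop :=
  forall r, exists s, Loc s /\ le (- s) r /\ le r s.

(* the fraction r/s (s in Loc) lies in R_loc^bd : exists n, -n <= r/s <= n,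
   i.e. (-n) * s <= r * 1 and r * 1 <= n * s *)
Definition bdfrac (r s : A) : Prop :=
  Loc s /\ exists n : nat, le (- (n%:R * s)) r /\ le r (n%:R * s).

(* An element of K(R): a positive unital ring morphism R_loc^bd -> R,
   represented by its values phi r s = phi(r/s) on representatives (r,s),
   respecting equality of fractions, and normalised to 0 on pairs that do not
   represent an element of R_loc^bd (so that such functions correspond
   bijectively to elements of K(R)).  Sum and product of fractions are
   (r s' + r' s)/(s s') and (r r')/(s s'); 0 <= r/s iff 0 <= r. *)
Definition character (phi : A -> A -> R) : Prop :=
  (forall r s, ~ bdfrac r s -> phi r s = R0) /\
  (forall r s r' s', bdfrac r s -> bdfrac r' s' -> r * s' = r' * s ->
      phi r s = phi r' s') /\
  (phi 1 1 = R1) /\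
  (forall r s r' s', bdfrac r s -> bdfrac r' s' ->
      phi (r * s' + r' * s) (s * s') = Rplus (phi r s) (phi r' s')) /\
  (forall r s r' s', bdfrac r s -> bdfrac r' s' ->
      phi (r * r') (s * s') = Rmult (phi r s) (phi r' s')) /\
  (forall r s, bdfrac r s -> le 0 r -> Rle R0 (phi r s)).

Definition inO (s : A) (phi : A -> A -> R) : Prop := Rlt R0 (phi 1 s).

Definition gelfand_comp (r s : A) (phi : A -> A -> R) : R :=
  Rmult (Rinv (phi 1 s)) (phi r s).

(* r is in the kernel of the extended Gelfand transformation:
   widehat r = 0 in C_approx(D_loc(R)), i.e. for (some/any) s in Loc with
   r/s bounded, r_s ≈ 0 : there is t in Loc with O_{t<oo} ⊆ O_{s<oo} and
   r_s vanishing on O_{t<oo}. *)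
Definition in_gelfand_kernel (r : A) : Prop :=
  exists s, bdfrac r s /\
    exists t, Loc t /\
      (forall phi, character phi -> inO t phi -> inO s phi) /\
      (forall phi, character phi -> inO t phi -> gelfand_comp r s phi = R0).

End PO.

From Stdlib Require Import Reals Lra Psatz.
From HB Require Import structures.
From mathcomp Require Import all_boot all_order all_algebra.
From mathcomp Require Import boolp classical_sets.
From mathcomp Require Import ring.
Import GRing.Theory.
Set Implicit Arguments. Unset Strict Implicit. Unset Printing Implicit Defensive.

(* The bounded fractions r/s (s in Loc(R)) form a ring R_loc^bd whose positive
   cone T is an archimedean preordering in which every positive integer is
   invertible, and the elements of K(R) are exactly the characters of
   R_loc^bd that are nonnegative on T.  By the Kadison-Dubois representation
   theorem, an element b of such a ring is annihilated by all these characters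
   iff 1 - n b and 1 + n b lie in T for every n > 0.  For b = r/(st) this says
   -st <= n r <= st; conversely, if -s <= n r <= s for all n and t in Loc(R)
   dominates s, then b = r/t satisfies the criterion, so all characters vanish
   at r/t.  Kadison-Dubois itself is proved by extending T away from -f to a
   maximal proper preordering M, which is total, and reading off a character
   from M by Dedekind cuts against the rationals. *)

Section RealFacts.
Local Open Scope R_scope.

Lemma INR_gt0 (m : nat) : (0 < m)%N -> 0 < INR m.
Proof. by move=> m_gt0; apply: lt_0_INR; apply/ltP. Qed.

Lemma eq0_of_bounded_multiples (d K : R) :
  (forall m : nat, (0 < m)%N -> - K <= INR m * d <= K) -> d = 0.
Proof.
move=> bounded; case: (Req_dec d 0) => // d_neq0; exfalso.
have d_pos : 0 < Rabs d by apply: Rabs_pos_lt.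
have [n n_big] := INR_unbounded (K / Rabs d).
have /Rabs_le md_le : - K <= INR n.+1 * d <= K by apply: bounded.
rewrite Rabs_mult (Rabs_pos_eq _ (pos_INR _)) S_INR in md_le.
have : K / Rabs d * Rabs d = K by rewrite -Rmult_div_swap Rmult_div_l //; lra.
nra.
Qed.

Lemma INR_divK (u : R) (m : nat) : (0 < m)%N -> u / INR m * INR m = u.
Proof. by move=> /INR_gt0 m_gt0; rewrite -Rmult_div_swap Rmult_div_l //; lra. Qed.

End RealFacts.

Lemma nat_threshold (P : nat -> Prop) (K : nat) :
  P 0%N -> ~ P K -> exists j, P j /\ ~ P j.+1.
Proof.
elim: K => [//|K IH] P0 PK.
by case: (pselect (P K)) => [P_K|nP_K]; [exists K | exact: IH].
Qed.

Section Chains.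
Local Open Scope classical_set_scope.
Variable U : Type.

Lemma bigcup_chain_closed (F : set (set U)) (op : U -> U -> U) :
  total_on F subset -> (forall X x y, F X -> X x -> X y -> X (op x y)) ->
  forall x y, (\bigcup_(X in F) X) x -> (\bigcup_(X in F) X) y ->
    (\bigcup_(X in F) X) (op x y).
Proof.
move=> F_total F_op x y [X FX Xx] [Y FY Yy].
case: (F_total X Y FX FY) => [XY|YX].
  by exists Y => //; apply: F_op (XY _ Xx) Yy.
by exists X => //; apply: F_op Xx (YX _ Yy).
Qed.

End Chains.

(** * The Kadison-Dubois representation theorem *)

Section KadisonDubois.
Local Open Scope classical_set_scope.
Local Open Scope ring_scope.
Variable B : comPzRingType.

Section Additive.
Variable F : B -> R.
Hypothesis F_add : forall x y, F (x + y) = Rplus (F x) (F y).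

Lemma Radditive0 : F 0 = R0.
Proof. by have := F_add 0 0; rewrite addr0; lra. Qed.

Lemma RadditiveN x : F (- x) = Ropp (F x).
Proof. by have := F_add x (- x); rewrite subrr Radditive0; lra. Qed.

Lemma Radditive_natr : F 1 = R1 -> forall n, F n%:R = INR n.
Proof.
move=> F1; elim=> [|n IH]; first exact: Radditive0.
by rewrite mulrSr F_add IH F1 S_INR.
Qed.

End Additive.

Variable T : set B.

Definition pos_char (F : B -> R) : Prop :=
  (forall x y, F (x + y) = Rplus (F x) (F y)) /\
  (forall x y, F (x * y) = Rmult (F x) (F y)) /\
  F 1 = R1 /\ (forall x, T x -> Rle R0 (F x)).

Record preordering (X : set B) : Prop := Preordering {
  preord_T : forall x, T x -> X x;
  preord_add : forall x y, X x -> X y -> X (x + y);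
  preord_mul : forall x y, X x -> X y -> X (x * y) }.

Hypothesis T_add : forall x y, T x -> T y -> T (x + y).
Hypothesis T_mul : forall x y, T x -> T y -> T (x * y).
Hypothesis T_sqr : forall x, T (x * x).
Hypothesis T_archi : forall x, exists N : nat, T (N%:R - x) /\ T (N%:R + x).
Hypothesis natr_inv : forall m : nat, (0 < m)%N -> exists i, m%:R * i = 1 :> B.

Lemma T0 : T 0. Proof. by have := T_sqr 0; rewrite mulr0. Qed.
Lemma T1 : T 1. Proof. by have := T_sqr 1; rewrite mulr1. Qed.

Lemma T_natr n : T n%:R.
Proof. elim: n => [|n IH]; [exact: T0 | rewrite mulrSr; exact: T_add IH T1]. Qed.

Lemma T_preordering : preordering T.
Proof. by split. Qed.

Lemma T_natr_inv m : (0 < m)%N -> exists2 i, m%:R * i = 1 & T i.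
Proof.
move=> m_gt0; have [i mi1] := natr_inv m_gt0; exists i => //.
have -> : i = m%:R * (i * i) by rewrite mulrA mi1 mul1r.
exact: T_mul (T_natr m) (T_sqr i).
Qed.

Lemma T_divn m x : (0 < m)%N -> T (m%:R * x) -> T x.
Proof.
move=> m_gt0 Tmx; have [i mi1 Ti] := T_natr_inv m_gt0.
have -> : x = (m%:R * x) * i by rewrite mulrAC mi1 mul1r.
exact: T_mul.
Qed.

Lemma T_of_mul_1D f p q : T p -> T q -> f * p = 1 + q -> T f.
Proof.
move=> Tp Tq fpE.
have [N [TNp _]] := T_archi p; have [K [_ TKf]] := T_archi f.
pose N' := N.+1.
have TN'p : T (N'%:R - p).
  have -> : N'%:R - p = (N%:R - p) + 1 by rewrite /N' mulrSr; ring.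
  exact: T_add TNp T1.
(* multiplying by N' - p, which lies in T, lowers the constant term by one *)
have lower k : T (N'%:R * f + k%:R) -> T (N'%:R * f).
  elim: k => [|k IH] Tk; first by rewrite addr0 in Tk.
  apply/IH/(@T_divn N') => //.
  have -> : N'%:R * (N'%:R * f + k%:R) =
     N'%:R * q + (N'%:R * f + k.+1%:R) * (N'%:R - p) + k.+1%:R * p
     + N'%:R * (f * p - (1 + q)) by rewrite mulrSr; ring.
  rewrite fpE subrr mulr0 addr0.
  apply: T_add; last exact: T_mul (T_natr _) Tp.
  exact: T_add (T_mul (T_natr _) Tq) (T_mul Tk TN'p).
apply: (@T_divn N') => //; apply: (lower (N' * K)%N).
have -> : N'%:R * f + (N' * K)%:R = N'%:R * (K%:R + f) by rewrite natrM; ring.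
exact: T_mul (T_natr _) TKf.
Qed.

Section TotalPreordering.
Variable M : set B.
Hypothesis M_preord : preordering M.
Hypothesis M_proper : ~ M (-1).
Hypothesis M_total : forall x, M x \/ M (- x).

Let M_T := preord_T M_preord.
Let M_add := preord_add M_preord.
Let M_mul := preord_mul M_preord.

Lemma M_natr n : M n%:R. Proof. exact/M_T/T_natr. Qed.

Definition natd (a b : nat) : B := a%:R - b%:R.

Lemma M_natd_leq a b : M (natd a b) -> (b <= a)%N.
Proof.
move=> Mab; case: (leqP b a) => // ltab; exfalso; apply: M_proper.
have ba_gt0 : (0 < b - a)%N by rewrite subn_gt0.
have [i ba_i Ti] := T_natr_inv ba_gt0.
have -> : -1 = natd a b * i.
  rewrite /natd -[in b%:R](subnKC (ltnW ltab)) natrD.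
  by rewrite opprD addrA subrr add0r mulNr ba_i.
exact: M_mul Mab (M_T Ti).
Qed.

Lemma M_bracket x m b : M (m%:R * x - natd 0 b) ->
  exists a, M (m%:R * x - natd a b) /\ M (natd a.+1 b - m%:R * x).
Proof.
move=> P0; have [N [TNx _]] := T_archi x.
pose P a := M (m%:R * x - natd a b).
have PK : ~ P (m * N + b).+1.
  move=> PmNb; apply: M_proper.
  have -> : -1 = (m%:R * x - natd (m * N + b).+1 b) + m%:R * (N%:R - x)
    by rewrite /natd mulrSr natrD natrM; ring.
  exact: M_add PmNb (M_mul (M_natr m) (M_T TNx)).
have [a [Pa nPa1]] := nat_threshold P0 PK.
exists a; split => //.
by case: (M_total (m%:R * x - natd a.+1 b)) => //; rewrite opprB.
Qed.

Lemma M_bracket_int x m : exists a b,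
  M (m%:R * x - natd a b) /\ M (natd a.+1 b - m%:R * x).
Proof.
have [N [_ TNx]] := T_archi x.
suff [a Ha] : exists a, M (m%:R * x - natd a (m * N)) /\
    M (natd a.+1 (m * N) - m%:R * x) by exists a, (m * N)%N.
apply: M_bracket.
have -> : m%:R * x - natd 0 (m * N) = m%:R * (N%:R + x) by rewrite /natd natrM; ring.
exact: M_mul (M_natr m) (M_T TNx).
Qed.

Lemma M_bracket_nat x m : M x ->
  exists c, M (m%:R * x - natd c 0) /\ M (natd c.+1 0 - m%:R * x).
Proof.
move=> Mx; apply: M_bracket.
by rewrite /natd subrr subr0; exact: M_mul (M_natr m) Mx.
Qed.

Definition lower_cut x : R -> Prop := fun y => exists a b m, (0 < m)%N /\
  Rmult y (INR m) = Rminus (INR a) (INR b) /\ M (m%:R * x - natd a b).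

Lemma lower_cut_bound x : bound (lower_cut x).
Proof.
have [N [TNx _]] := T_archi x.
exists (INR N) => y [a [b [m [m_gt0 [ymE Mx]]]]].
have : M (natd (m * N + b) a).
  have -> : natd (m * N + b) a = m%:R * (N%:R - x) + (m%:R * x - natd a b)
    by rewrite /natd natrD natrM; ring.
  exact: M_add (M_mul (M_natr m) (M_T TNx)) Mx.
move/M_natd_leq/leP/le_INR; rewrite plus_INR mult_INR => le_a.
have := INR_gt0 m_gt0; nra.
Qed.

Lemma lower_cut_inhabited x : exists y, lower_cut x y.
Proof.
have [a [b [Mx _]]] := M_bracket_int x 1.
by exists (Rminus (INR a) (INR b)), a, b, 1%N; rewrite /= Rmult_1_r.
Qed.

Definition Phi x : R :=
  proj1_sig (completeness _ (lower_cut_bound x) (lower_cut_inhabited x)).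

Lemma Phi_lub x : is_lub (lower_cut x) (Phi x).
Proof. exact: proj2_sig. Qed.

Lemma Phi_lower x a b m : (0 < m)%N -> M (m%:R * x - natd a b) ->
  Rle (Rminus (INR a) (INR b)) (Rmult (INR m) (Phi x)).
Proof.
move=> m_gt0 Mx; have [ub _] := Phi_lub x.
have := ub _ (ex_intro _ a (ex_intro _ b (ex_intro _ m
  (conj m_gt0 (conj (INR_divK _ m_gt0) Mx))))).
have := INR_divK (Rminus (INR a) (INR b)) m_gt0; have := INR_gt0 m_gt0; nra.
Qed.

Lemma Phi_upper x a b m : (0 < m)%N -> M (natd a b - m%:R * x) ->
  Rle (Rmult (INR m) (Phi x)) (Rminus (INR a) (INR b)).
Proof.
move=> m_gt0 Mx; have [_ lub] := Phi_lub x.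
have := INR_divK (Rminus (INR a) (INR b)) m_gt0.
set u := Rdiv _ _ => uE; have m_pos := INR_gt0 m_gt0.
suff : Rle (Phi x) u by nra.
apply: lub => y [a' [b' [m' [m'_gt0 [ymE Mx']]]]].
have : M (natd (m' * a + m * b') (m' * b + m * a')).
  have -> : natd (m' * a + m * b') (m' * b + m * a') =
     m'%:R * (natd a b - m%:R * x) + m%:R * (m'%:R * x - natd a' b')
    by rewrite /natd !natrD !natrM; ring.
  exact: M_add (M_mul (M_natr _) Mx) (M_mul (M_natr _) Mx').
move/M_natd_leq/leP/le_INR; rewrite !plus_INR !mult_INR => le_ab.
have m'_pos := INR_gt0 m'_gt0.
have : Rlt R0 (Rmult (INR m) (INR m')) by nra.
nra.
Qed.

Lemma Phi_nonneg x : M x -> Rle R0 (Phi x).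
Proof.
move=> Mx; have := @Phi_lower x 0 0 1 isT.
by rewrite /natd subrr subr0 mul1r /= Rminus_0_r Rmult_1_l; apply.
Qed.

Lemma Phi_nonpos x : M (- x) -> Rle (Phi x) R0.
Proof.
move=> Mx; have := @Phi_upper x 0 0 1 isT.
by rewrite /natd subrr sub0r mul1r /= Rminus_0_r Rmult_1_l; apply.
Qed.

Lemma Phi1 : Phi 1 = R1.
Proof.
have L := @Phi_lower 1 1 0 1 isT; have U := @Phi_upper 1 1 0 1 isT.
rewrite /natd subr0 mul1r subrr in L U.
have := L (M_natr 0); have := U (M_natr 0); rewrite /= Rminus_0_r Rmult_1_l; lra.
Qed.

Lemma Phi_add x y : Phi (x + y) = Rplus (Phi x) (Phi y).
Proof.
apply: Rminus_diag_uniq; apply: (@eq0_of_bounded_multiples _ (INR 2)) => m m_gt0.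
have [a1 [b1 [Mx1 Mx2]]] := M_bracket_int x m.
have [a2 [b2 [My1 My2]]] := M_bracket_int y m.
have Mxy1 : M (m%:R * (x + y) - natd (a1 + a2) (b1 + b2)).
  have -> : m%:R * (x + y) - natd (a1 + a2) (b1 + b2) =
     (m%:R * x - natd a1 b1) + (m%:R * y - natd a2 b2) by rewrite /natd !natrD; ring.
  exact: M_add Mx1 My1.
have Mxy2 : M (natd (a1.+1 + a2.+1) (b1 + b2) - m%:R * (x + y)).
  have -> : natd (a1.+1 + a2.+1) (b1 + b2) - m%:R * (x + y) =
     (natd a1.+1 b1 - m%:R * x) + (natd a2.+1 b2 - m%:R * y) by rewrite /natd !natrD; ring.
  exact: M_add Mx2 My2.
have := Phi_lower m_gt0 Mxy1; have := Phi_upper m_gt0 Mxy2.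
have := Phi_lower m_gt0 Mx1; have := Phi_upper m_gt0 Mx2.
have := Phi_lower m_gt0 My1; have := Phi_upper m_gt0 My2.
rewrite !plus_INR !S_INR /=; lra.
Qed.

Lemma Phi_natr n : Phi n%:R = INR n.
Proof. exact: Radditive_natr Phi_add Phi1 n. Qed.

Lemma Phi_mul_nonneg x y : M x -> M y -> Phi (x * y) = Rmult (Phi x) (Phi y).
Proof.
move=> Mx My.
have X0 := Phi_nonneg Mx; have Y0 := Phi_nonneg My.
apply: Rminus_diag_uniq.
apply: (@eq0_of_bounded_multiples _ (Rplus (Rplus (Phi x) (Phi y)) R1)) => m m_gt0.
have [cx [Mx1 Mx2]] := M_bracket_nat m Mx.
have [cy [My1 My2]] := M_bracket_nat m My.
have mm_gt0 : (0 < m * m)%N by rewrite muln_gt0 m_gt0.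
have Mxy1 : M ((m * m)%:R * (x * y) - natd (cx * cy) 0).
  have -> : (m * m)%:R * (x * y) - natd (cx * cy) 0 =
    (m%:R * x - natd cx 0) * (m%:R * y - natd cy 0) + cx%:R * (m%:R * y - natd cy 0)
     + cy%:R * (m%:R * x - natd cx 0) by rewrite /natd !natrM; ring.
  apply: M_add (M_mul (M_natr _) Mx1).
  exact: M_add (M_mul Mx1 My1) (M_mul (M_natr _) My1).
have Mxy2 : M (natd (cx.+1 * cy.+1) 0 - (m * m)%:R * (x * y)).
  have -> : natd (cx.+1 * cy.+1) 0 - (m * m)%:R * (x * y) =
    (natd cx.+1 0 - m%:R * x) * cy.+1%:R + (m%:R * x) * (natd cy.+1 0 - m%:R * y)
    by rewrite /natd !natrM; ring.
  exact: M_add (M_mul Mx2 (M_natr _)) (M_mul (M_mul (M_natr _) Mx) My2).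
have := Phi_lower mm_gt0 Mxy1; have := Phi_upper mm_gt0 Mxy2.
have := Phi_lower m_gt0 Mx1; have := Phi_upper m_gt0 Mx2.
have := Phi_lower m_gt0 My1; have := Phi_upper m_gt0 My2.
rewrite !mult_INR !S_INR /= Rminus_0_r.
have m_ge1 : Rle R1 (INR m) by apply: (le_INR 1); apply/leP.
have cx0 := pos_INR cx; have cy0 := pos_INR cy.
set mm := INR m in m_ge1 *; set X := Phi x in X0 *; set Y := Phi y in Y0 *.
set Z := Phi (x * y); set Cx := INR cx in cx0 *; set Cy := INR cy in cy0 *.
move=> Ly Uy Lx Ux Uxy Lxy.
have P1 : Rle (Rmult Cx Cy) (Rmult (Rmult mm X) (Rmult mm Y)) by nra.
have P2 : Rle (Rmult (Rmult mm X) (Rmult mm Y)) (Rmult (Rplus Cx R1) (Rplus Cy R1)) by nra.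
split; apply: (Rmult_le_reg_l mm); nra.
Qed.

Lemma Phi_mul x y : Phi (x * y) = Rmult (Phi x) (Phi y).
Proof.
have [N [_ TNx]] := T_archi x; have [N' [_ TNy]] := T_archi y.
have -> : x * y = (N%:R + x) * (N'%:R + y) - N'%:R * (N%:R + x)
                 - N%:R * (N'%:R + y) + N%:R * N'%:R by ring.
have MX := M_T TNx; have MY := M_T TNy.
rewrite !Phi_add !(RadditiveN Phi_add) (Phi_mul_nonneg MX MY).
rewrite (Phi_mul_nonneg (M_natr N') MX) (Phi_mul_nonneg (M_natr N) MY).
rewrite (Phi_mul_nonneg (M_natr N) (M_natr N')) !Phi_add !Phi_natr; lra.
Qed.

Lemma Phi_pos_char : pos_char Phi.
Proof.
split; first exact: Phi_add.
split; first exact: Phi_mul.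
by split; [exact: Phi1 | move=> x /M_T; exact: Phi_nonneg].
Qed.

End TotalPreordering.

Definition adjoin (X : set B) (b : B) : set B :=
  fun x => exists y z, X y /\ X z /\ x = y + b * z.

Section Adjoin.
Variable X : set B.
Hypothesis X_preord : preordering X.

Let X_T := preord_T X_preord.
Let X_add := preord_add X_preord.
Let X_mul := preord_mul X_preord.
Let X0 : X 0. Proof. exact/X_T/T0. Qed.
Let X1 : X 1. Proof. exact/X_T/T1. Qed.

Lemma sub_adjoin b : X `<=` adjoin X b.
Proof. by move=> x Xx; exists x, 0; rewrite mulr0 addr0. Qed.

Lemma adjoin_mem b : adjoin X b b.
Proof. by exists 0, 1; rewrite mulr1 add0r. Qed.

Lemma preordering_adjoin b : preordering (adjoin X b).
Proof.
split; first by move=> x /X_T; exact: sub_adjoin.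
  move=> _ _ [y1 [z1 [Xy1 [Xz1 ->]]]] [y2 [z2 [Xy2 [Xz2 ->]]]].
  by exists (y1 + y2), (z1 + z2); do !split; [exact: X_add | exact: X_add | ring].
move=> _ _ [y1 [z1 [Xy1 [Xz1 ->]]]] [y2 [z2 [Xy2 [Xz2 ->]]]].
exists (y1 * y2 + (b * b) * (z1 * z2)), (y1 * z2 + y2 * z1); do !split; last by ring.
  exact: X_add (X_mul Xy1 Xy2) (X_mul (X_T (T_sqr b)) (X_mul Xz1 Xz2)).
exact: X_add (X_mul Xy1 Xz2) (X_mul Xy2 Xz1).
Qed.

End Adjoin.

Lemma maximal_preordering X0 : preordering X0 -> ~ X0 (-1) ->
  exists2 M, X0 `<=` M & [/\ preordering M, ~ M (-1) &
    forall M', M `<` M' -> preordering M' -> M' (-1)].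
Proof.
move=> X0_preord X0_proper.
(* set0 is admitted so that the empty chain has an upper bound *)
pose P X := X = set0 \/ [/\ X0 `<=` X, preordering X & ~ X (-1)].
have P_chain F : F `<=` P -> total_on F subset -> P (\bigcup_(X in F) X).
  move=> FP F_total.
  have union_closed op :
      (forall X, P X -> X <> set0 -> forall x y, X x -> X y -> X (op x y)) ->
      forall x y, (\bigcup_(X in F) X) x -> (\bigcup_(X in F) X) y ->
      (\bigcup_(X in F) X) (op x y).
    move=> P_op; apply: bigcup_chain_closed => // X x y FX Xx.
    have X_neq0 : X <> set0 by move=> XE; rewrite XE in Xx.
    exact: P_op (FP _ FX) X_neq0 x y Xx.
  have P_nonempty X x : F X -> X x -> [/\ X0 `<=` X, preordering X & ~ X (-1)].
    by move=> FX Xx; case: (FP X FX) => // X0E; rewrite X0E in Xx.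
  case: (pselect (exists X x, F X /\ X x)) => [[G [g [FG Gg]]]|F0]; last first.
    left; apply/seteqP; split => x // [X FX Xx]; apply: F0; by exists X, x.
  have [X0G G_preord _] := P_nonempty _ _ FG Gg.
  right; split.
  - by move=> x X0x; exists G => //; exact: X0G.
  - split.
    + by move=> x Tx; exists G => //; exact: preord_T G_preord _ Tx.
    + apply: union_closed => X [->//|[_ [_ X_add _] _]] _; exact: X_add.
    + apply: union_closed => X [->//|[_ [_ _ X_mul] _]] _; exact: X_mul.
  - by move=> [X FX Xm1]; have [_ _] := P_nonempty _ _ FX Xm1; apply.
have [M [PM M_max]] := Zorn_bigcup P_chain.
case: PM => [M0|[X0M M_preord M_proper]].
  exfalso; apply: (M_max X0); last by right; split.
  rewrite M0; split => // X0_empty.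
  exact: X0_empty 0 (preord_T X0_preord T0).
exists M => //; split => // M' MM' M'_preord.
apply: contrapT => M'_proper; apply: (M_max M' MM'); right.
by split => //; exact: subset_trans X0M (properW MM').
Qed.

Lemma maximal_preordering_total M : preordering M -> ~ M (-1) ->
  (forall M', M `<` M' -> preordering M' -> M' (-1)) -> forall a, M a \/ M (- a).
Proof.
move=> M_preord M_proper M_max a.
case: (pselect (M a)) => Ma; first by left.
case: (pselect (M (- a))) => Mna; first by right.
have adjoin_m1 b : ~ M b -> adjoin M b (-1).
  move=> Mb; apply: M_max (preordering_adjoin M_preord b).
  split; first exact: sub_adjoin.
  by move=> /(_ b (adjoin_mem M_preord b)).
have [y1 [z1 [My1 [Mz1 E1]]]] := adjoin_m1 _ Ma.
have [y2 [z2 [My2 [Mz2 E2]]]] := adjoin_m1 _ Mna.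
have [M_T M_add M_mul] := M_preord.
exfalso; apply: M_proper.
(* -1 = y1 + a z1 = y2 - a z2, so (1 + y1) (1 + y2) = - a^2 z1 z2 *)
have -> : -1 = y1 + y2 + y1 * y2 + (a * a) * (z1 * z2).
  have -> : y1 = -1 - a * z1 by rewrite E1; ring.
  have -> : y2 = -1 + a * z2 by rewrite E2; ring.
  ring.
apply: M_add _ _ (M_add _ _ (M_add _ _ My1 My2) (M_mul _ _ My1 My2)) _.
exact: M_mul _ _ (M_T _ (T_sqr a)) (M_mul _ _ Mz1 Mz2).
Qed.

Theorem kadison_dubois f : (forall F, pos_char F -> Rlt R0 (F f)) -> T f.
Proof.
move=> f_pos.
case: (pselect (exists p q, T p /\ T q /\ f * p = 1 + q)) => [[p [q [Tp [Tq E]]]]|no_unit].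
  exact: T_of_mul_1D Tp Tq E.
have X0_proper : ~ adjoin T (- f) (-1).
  move=> [p [q [Tp [Tq E]]]]; apply: no_unit; exists q, p; do !split => //.
  have -> : f * q = 1 + p + (-1 - (p + - f * q)) by ring.
  by rewrite -E subrr addr0.
have [M X0M [M_preord M_proper M_max]] :=
  maximal_preordering (preordering_adjoin T_preordering (- f)) X0_proper.
have M_total := maximal_preordering_total M_preord M_proper M_max.
have Mf : M (- f) := X0M _ (adjoin_mem T_preordering (- f)).
have := f_pos _ (Phi_pos_char M_preord M_proper M_total).
have := Phi_nonpos M_preord M_proper M_total Mf; lra.
Qed.

Lemma pos_char_kernelE b :
  (forall F, pos_char F -> F b = R0) <->
  (forall n : nat, (0 < n)%N -> T (1 - n%:R * b) /\ T (1 + n%:R * b)).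
Proof.
have charE F n : pos_char F ->
    F (1 - n%:R * b) = Rminus R1 (Rmult (INR n) (F b)) /\
    F (1 + n%:R * b) = Rplus R1 (Rmult (INR n) (F b)).
  move=> [F_add [F_mul [F1 _]]].
  by rewrite !F_add (RadditiveN F_add) F_mul (Radditive_natr F_add F1) F1.
split=> [Fb0 n _ | Tb F F_char].
  by split; apply: kadison_dubois => F F_char;
    have [E1m E1p] := charE F n F_char; rewrite ?E1m ?E1p Fb0 //; lra.
apply: (@eq0_of_bounded_multiples _ R1) => n n_gt0.
have [T1m T1p] := Tb n n_gt0; have [E1m E1p] := charE F n F_char.
have [_ [_ [_ F_pos]]] := F_char.
have := F_pos _ T1m; have := F_pos _ T1p; rewrite E1m E1p; lra.
Qed.
End KadisonDubois.

(** * The ring of bounded fractions *)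

Section BoundedFractions.
Local Open Scope ring_scope.
Variable A : comPzRingType.
Variable le : A -> A -> Prop.
Hypothesis le_pocr : is_pocr le.
Hypothesis natr_Loc : forall n : nat, (0 < n)%N -> Loc le (n%:R : A).

Local Notation pos x := (le 0 x).

Lemma le_pos x y : le x y <-> pos (y - x).
Proof.
have [_ [_ [_ [le_add _]]]] := le_pocr; split => H.
  by have := le_add _ _ (- x) H; rewrite subrr.
by have := le_add _ _ x H; rewrite add0r subrK.
Qed.

Lemma pos_add x y : pos x -> pos y -> pos (x + y).
Proof.
have [_ [_ [le_trans [le_add _]]]] := le_pocr => px py.
by apply: le_trans py _; have := le_add _ _ y px; rewrite add0r.
Qed.

Lemma pos_mul x y : pos x -> pos y -> pos (x * y).
Proof. by have [_ [_ [_ [_ [le_mul _]]]]] := le_pocr; apply: le_mul. Qed.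

Lemma pos_sqr x : pos (x * x).
Proof. by have [_ [_ [_ [_ [_ le_sqr]]]]] := le_pocr; apply: le_sqr. Qed.

Lemma pos0 : pos 0. Proof. by have := pos_sqr 0; rewrite mulr0. Qed.
Lemma pos1 : pos 1. Proof. by have := pos_sqr 1; rewrite mulr1. Qed.

Lemma pos_natr n : pos n%:R.
Proof. elim: n => [|n IH]; [exact: pos0 | rewrite mulrSr; exact: pos_add IH pos1]. Qed.

Lemma pos_anti x : pos x -> pos (- x) -> x = 0.
Proof.
have [_ [le_anti _]] := le_pocr => px pNx; apply: le_anti => //.
by apply/le_pos; rewrite sub0r.
Qed.

Lemma pos_eq x y : x = y -> pos x -> pos y. Proof. by move=> ->. Qed.

Lemma Loc_pos s : Loc le s -> pos s.
Proof. by move=> [s1 _]; have := pos_add s1 pos1; rewrite subrK. Qed.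

Lemma Loc_regular s r : Loc le s -> r * s = 0 -> r = 0.
Proof.
move=> [_ s_reg] rs0; apply: pos_anti; apply: s_reg; first by rewrite rs0; exact: pos0.
by rewrite mulNr rs0 oppr0; exact: pos0.
Qed.

Lemma Loc_mul s s' : Loc le s -> Loc le s' -> Loc le (s * s').
Proof.
move=> [s1 s_reg] [s'1 s'_reg]; split.
  have -> : s * s' - 1 = (s - 1) * (s' - 1) + (s - 1) + (s' - 1) by ring.
  exact: pos_add (pos_add (pos_mul s1 s'1) s1) s'1.
by move=> r rss'; apply/s_reg/s'_reg; rewrite -mulrA.
Qed.

Lemma Loc1 : Loc le 1.
Proof. by split=> [|r]; [rewrite subrr; exact: pos0 | rewrite mulr1]. Qed.

Lemma pos_divn n x : (0 < n)%N -> pos (n%:R * x) -> pos x.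
Proof. by move=> n_gt0 pnx; have [_ n_reg] := natr_Loc n_gt0; apply: n_reg; rewrite mulrC. Qed.

Definition bdpair (x : A * A) := bdfrac le x.1 x.2.

Lemma bdpairE x : bdpair x <->
  Loc le x.2 /\ exists n : nat, pos (n%:R * x.2 + x.1) /\ pos (n%:R * x.2 - x.1).
Proof.
rewrite /bdpair /bdfrac; split => -[Lx [n [lo hi]]]; split => //; exists n.
  by move/le_pos: lo; rewrite opprK addrC => lo; move/le_pos: hi.
by split; apply/le_pos => //; rewrite opprK addrC.
Qed.

Definition frac_add (x y : A * A) := (x.1 * y.2 + y.1 * x.2, x.2 * y.2).
Definition frac_mul (x y : A * A) := (x.1 * y.1, x.2 * y.2).
Definition frac_opp (x : A * A) := (- x.1, x.2).
Definition frac_eq (x y : A * A) := x.1 * y.2 = y.1 * x.2.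

Lemma bdpair_add x y : bdpair x -> bdpair y -> bdpair (frac_add x y).
Proof.
move=> /bdpairE [Lx [n [x_lo x_hi]]] /bdpairE [Ly [n' [y_lo y_hi]]].
apply/bdpairE; split; first exact: Loc_mul.
have px := Loc_pos Lx; have py := Loc_pos Ly.
exists (n + n')%N; rewrite /frac_add /=; split.
  have -> : (n + n')%:R * (x.2 * y.2) + (x.1 * y.2 + y.1 * x.2) =
    (n%:R * x.2 + x.1) * y.2 + (n'%:R * y.2 + y.1) * x.2 by rewrite natrD; ring.
  exact: pos_add (pos_mul _ _) (pos_mul _ _).
have -> : (n + n')%:R * (x.2 * y.2) - (x.1 * y.2 + y.1 * x.2) =
  (n%:R * x.2 - x.1) * y.2 + (n'%:R * y.2 - y.1) * x.2 by rewrite natrD; ring.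
exact: pos_add (pos_mul _ _) (pos_mul _ _).
Qed.

Lemma bdpair_mul x y : bdpair x -> bdpair y -> bdpair (frac_mul x y).
Proof.
move=> /bdpairE [Lx [n [x_lo x_hi]]] /bdpairE [Ly [n' [y_lo y_hi]]].
apply/bdpairE; split; first exact: Loc_mul.
exists (n * n')%N; rewrite /frac_mul /=; split; apply: (@pos_divn 2) => //.
  have -> : 2%:R * ((n * n')%:R * (x.2 * y.2) + x.1 * y.1) =
    (n%:R * x.2 - x.1) * (n'%:R * y.2 - y.1) + (n%:R * x.2 + x.1) * (n'%:R * y.2 + y.1)
    by rewrite natrM; ring.
  exact: pos_add (pos_mul _ _) (pos_mul _ _).
have -> : 2%:R * ((n * n')%:R * (x.2 * y.2) - x.1 * y.1) =
  (n%:R * x.2 - x.1) * (n'%:R * y.2 + y.1) + (n%:R * x.2 + x.1) * (n'%:R * y.2 - y.1)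
  by rewrite natrM; ring.
exact: pos_add (pos_mul _ _) (pos_mul _ _).
Qed.

Lemma bdpair_opp x : bdpair x -> bdpair (frac_opp x).
Proof.
move=> /bdpairE [Lx [n [lo hi]]]; apply/bdpairE; split => //.
by exists n; rewrite /frac_opp /= opprK.
Qed.

Lemma bdpair_natr n : bdpair (n%:R, 1).
Proof.
apply/bdpairE; split; first exact: Loc1.
exists n; rewrite /= mulr1 subrr; split; [exact: pos_add (pos_natr n) (pos_natr n) | exact: pos0].
Qed.

Lemma bdpair_inv s : Loc le s -> bdpair (1, s).
Proof.
move=> Ls; apply/bdpairE; split => //; exists 1%N; rewrite /= mul1r.
by split; [exact: pos_add (Loc_pos Ls) pos1 | case: Ls].
Qed.

Lemma frac_eq_sym x y : frac_eq x y -> frac_eq y x. Proof. by []. Qed.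

Lemma frac_eq_trans x y z : Loc le y.2 -> frac_eq x y -> frac_eq y z -> frac_eq x z.
Proof.
rewrite /frac_eq => Ly xy yz; apply/eqP; rewrite -subr_eq0; apply/eqP.
apply: Loc_regular Ly _.
have -> : (x.1 * z.2 - z.1 * x.2) * y.2 = (x.1 * y.2) * z.2 - (z.1 * y.2) * x.2 by ring.
by rewrite xy -yz; ring.
Qed.

Lemma frac_eq_add x x' y y' :
  frac_eq x x' -> frac_eq y y' -> frac_eq (frac_add x y) (frac_add x' y').
Proof.
rewrite /frac_eq /frac_add /= => xx' yy'.
have -> : (x.1 * y.2 + y.1 * x.2) * (x'.2 * y'.2) =
  (x.1 * x'.2) * (y.2 * y'.2) + (y.1 * y'.2) * (x.2 * x'.2) by ring.
by rewrite xx' yy'; ring.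
Qed.

Lemma frac_eq_mul x x' y y' :
  frac_eq x x' -> frac_eq y y' -> frac_eq (frac_mul x y) (frac_mul x' y').
Proof.
rewrite /frac_eq /frac_mul /= => xx' yy'.
have -> : x.1 * y.1 * (x'.2 * y'.2) = (x.1 * x'.2) * (y.1 * y'.2) by ring.
by rewrite xx' yy'; ring.
Qed.

Lemma frac_eq_opp x x' : frac_eq x x' -> frac_eq (frac_opp x) (frac_opp x').
Proof. by rewrite /frac_eq /frac_opp /= !mulNr => ->. Qed.


Definition frac_class (x : A * A) : set (A * A) := fun y => bdpair y /\ frac_eq x y.

Record locbd := LocBd {
  locbd_class : set (A * A);
  locbd_classP : exists2 x, bdpair x & locbd_class = frac_class x }.

HB.instance Definition _ := gen_eqMixin locbd.
HB.instance Definition _ := gen_choiceMixin locbd.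

Lemma locbd_ext (a b : locbd) : locbd_class a = locbd_class b -> a = b.
Proof.
by case: a b => [C p] [C' p'] /= CC'; subst C'; congr LocBd; exact: Prop_irrelevance.
Qed.

Definition to_locbd (x : A * A) (h : bdpair x) : locbd := LocBd (ex_intro2 _ _ x h erefl).

Definition locbd_repr (b : locbd) : A * A := s2val (cid2 (locbd_classP b)).

Lemma locbd_reprP b : bdpair (locbd_repr b) /\ locbd_class b = frac_class (locbd_repr b).
Proof. by rewrite /locbd_repr; case: cid2. Qed.

Lemma to_locbd_eq x y (hx : bdpair x) (hy : bdpair y) :
  frac_eq x y -> to_locbd hx = to_locbd hy.
Proof.
move=> xy; apply: locbd_ext; apply/seteqP; split => z [hz xz]; split => //.
  by apply: frac_eq_trans (frac_eq_sym xy) xz; case/bdpairE: hx.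
by apply: frac_eq_trans xy xz; case/bdpairE: hy.
Qed.

Lemma frac_eq_repr x (h : bdpair x) : frac_eq (locbd_repr (to_locbd h)) x.
Proof.
have [_ /= clE] := locbd_reprP (to_locbd h).
by have : frac_class x x := conj h erefl; rewrite clE => -[].
Qed.

Lemma locbd_ind (P : locbd -> Prop) :
  (forall x (h : bdpair x), P (to_locbd h)) -> forall b, P b.
Proof.
move=> P_frac b; have [h clE] := locbd_reprP b.
suff -> : b = to_locbd h by exact: P_frac.
by apply: locbd_ext; rewrite clE.
Qed.

Definition locbd_add (a b : locbd) : locbd :=
  to_locbd (bdpair_add (locbd_reprP a).1 (locbd_reprP b).1).
Definition locbd_mul (a b : locbd) : locbd :=
  to_locbd (bdpair_mul (locbd_reprP a).1 (locbd_reprP b).1).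
Definition locbd_opp (a : locbd) : locbd := to_locbd (bdpair_opp (locbd_reprP a).1).
Definition locbd0 : locbd := to_locbd (bdpair_natr 0).
Definition locbd1 : locbd := to_locbd (bdpair_natr 1).

Lemma locbd_addE x y (hx : bdpair x) (hy : bdpair y) :
  locbd_add (to_locbd hx) (to_locbd hy) = to_locbd (bdpair_add hx hy).
Proof. by apply: to_locbd_eq; apply: frac_eq_add; exact: frac_eq_repr. Qed.

Lemma locbd_mulE x y (hx : bdpair x) (hy : bdpair y) :
  locbd_mul (to_locbd hx) (to_locbd hy) = to_locbd (bdpair_mul hx hy).
Proof. by apply: to_locbd_eq; apply: frac_eq_mul; exact: frac_eq_repr. Qed.

Lemma locbd_oppE x (hx : bdpair x) : locbd_opp (to_locbd hx) = to_locbd (bdpair_opp hx).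
Proof. by apply: to_locbd_eq; apply: frac_eq_opp; exact: frac_eq_repr. Qed.

Lemma locbd_addA : associative locbd_add.
Proof.
elim/locbd_ind => x hx; elim/locbd_ind => y hy; elim/locbd_ind => z hz.
by rewrite !locbd_addE; apply: to_locbd_eq; rewrite /frac_eq /=; ring.
Qed.

Lemma locbd_addC : commutative locbd_add.
Proof.
elim/locbd_ind => x hx; elim/locbd_ind => y hy.
by rewrite !locbd_addE; apply: to_locbd_eq; rewrite /frac_eq /=; ring.
Qed.

Lemma locbd_add0 : left_id locbd0 locbd_add.
Proof.
elim/locbd_ind => x hx.
by rewrite locbd_addE; apply: to_locbd_eq; rewrite /frac_eq /=; ring.
Qed.

Lemma locbd_addN : left_inverse locbd0 locbd_opp locbd_add.
Proof.
elim/locbd_ind => x hx.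
by rewrite locbd_oppE locbd_addE; apply: to_locbd_eq; rewrite /frac_eq /=; ring.
Qed.

HB.instance Definition _ :=
  GRing.isZmodule.Build locbd locbd_addA locbd_addC locbd_add0 locbd_addN.

Lemma locbd_mulA : associative locbd_mul.
Proof.
elim/locbd_ind => x hx; elim/locbd_ind => y hy; elim/locbd_ind => z hz.
by rewrite !locbd_mulE; apply: to_locbd_eq; rewrite /frac_eq /=; ring.
Qed.

Lemma locbd_mulC : commutative locbd_mul.
Proof.
elim/locbd_ind => x hx; elim/locbd_ind => y hy.
by rewrite !locbd_mulE; apply: to_locbd_eq; rewrite /frac_eq /=; ring.
Qed.

Lemma locbd_mul1 : left_id locbd1 locbd_mul.
Proof.
elim/locbd_ind => x hx.
by rewrite locbd_mulE; apply: to_locbd_eq; rewrite /frac_eq /=; ring.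
Qed.

Lemma locbd_mulDl : left_distributive locbd_mul locbd_add.
Proof.
elim/locbd_ind => x hx; elim/locbd_ind => y hy; elim/locbd_ind => z hz.
rewrite (locbd_addE hx hy) (locbd_mulE (bdpair_add hx hy) hz) !locbd_mulE locbd_addE.
by apply: to_locbd_eq; rewrite /frac_eq /=; ring.
Qed.

HB.instance Definition _ :=
  GRing.Zmodule_isComPzRing.Build locbd locbd_mulA locbd_mulC locbd_mul1 locbd_mulDl.


Lemma to_locbdD x y (hx : bdpair x) (hy : bdpair y) :
  to_locbd hx + to_locbd hy = to_locbd (bdpair_add hx hy).
Proof. exact: locbd_addE. Qed.

Lemma to_locbdM x y (hx : bdpair x) (hy : bdpair y) :
  to_locbd hx * to_locbd hy = to_locbd (bdpair_mul hx hy).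
Proof. exact: locbd_mulE. Qed.

Lemma to_locbdN x (hx : bdpair x) : - to_locbd hx = to_locbd (bdpair_opp hx).
Proof. exact: locbd_oppE. Qed.

Lemma to_locbd1 : 1 = to_locbd (bdpair_natr 1).
Proof. by []. Qed.

Lemma to_locbd_natr n : n%:R = to_locbd (bdpair_natr n).
Proof.
elim: n => [|n IH]; first exact: to_locbd_eq.
rewrite mulrSr IH to_locbd1 to_locbdD; apply: to_locbd_eq.
by rewrite /frac_eq /= mulrSr; ring.
Qed.

Definition locbd_pos (b : locbd) : Prop := pos (locbd_repr b).1.

Lemma locbd_posE x (h : bdpair x) : locbd_pos (to_locbd h) <-> pos x.1.
Proof.
have xE := frac_eq_repr h; have [/bdpairE [L _] _] := locbd_reprP (to_locbd h).
have /bdpairE [Lx _] := h; rewrite /locbd_pos; split => px.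
  by case: L => _; apply; rewrite -xE; exact: pos_mul px (Loc_pos Lx).
by case: Lx => _; apply; rewrite xE; exact: pos_mul px (Loc_pos L).
Qed.

Lemma locbd_pos_add a b : locbd_pos a -> locbd_pos b -> locbd_pos (a + b).
Proof.
elim/locbd_ind: a => x hx; elim/locbd_ind: b => y hy.
rewrite to_locbdD !locbd_posE /= => px py.
have /bdpairE [Lx _] := hx; have /bdpairE [Ly _] := hy.
exact: pos_add (pos_mul px (Loc_pos Ly)) (pos_mul py (Loc_pos Lx)).
Qed.

Lemma locbd_pos_mul a b : locbd_pos a -> locbd_pos b -> locbd_pos (a * b).
Proof.
elim/locbd_ind: a => x hx; elim/locbd_ind: b => y hy.
by rewrite to_locbdM !locbd_posE; exact: pos_mul.
Qed.

Lemma locbd_pos_sqr a : locbd_pos (a * a).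
Proof. by elim/locbd_ind: a => x hx; rewrite to_locbdM locbd_posE; exact: pos_sqr. Qed.

Lemma locbd_pos_archi a : exists N : nat, locbd_pos (N%:R - a) /\ locbd_pos (N%:R + a).
Proof.
elim/locbd_ind: a => x hx; have /bdpairE [_ [n [lo hi]]] := hx.
exists n; rewrite to_locbd_natr to_locbdN !to_locbdD !locbd_posE /= !mulr1.
by split; [move: hi | move: lo]; apply: pos_eq; ring.
Qed.

Lemma locbd_natr_inv m : (0 < m)%N -> exists i, m%:R * i = 1 :> locbd.
Proof.
move=> m_gt0; exists (to_locbd (bdpair_inv (natr_Loc m_gt0))).
by rewrite to_locbd_natr to_locbdM; apply: to_locbd_eq; rewrite /frac_eq /=; ring.
Qed.

Lemma locbd_pos_1D n x (h : bdpair x) :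
  locbd_pos (1 + n%:R * to_locbd h) <-> pos (x.2 + x.1 *+ n).
Proof.
rewrite to_locbd_natr to_locbd1 to_locbdM to_locbdD locbd_posE.
by split; apply: pos_eq => /=; ring.
Qed.

Lemma locbd_pos_1B n x (h : bdpair x) :
  locbd_pos (1 - n%:R * to_locbd h) <-> pos (x.2 - x.1 *+ n).
Proof. by rewrite -mulrN to_locbdN locbd_pos_1D /= mulNrn. Qed.

Lemma locbd_char_kernelE x (h : bdpair x) :
  (forall F, pos_char locbd_pos F -> F (to_locbd h) = R0) <->
  (forall n : nat, (0 < n)%N -> pos (x.2 - x.1 *+ n) /\ pos (x.2 + x.1 *+ n)).
Proof.
rewrite (pos_char_kernelE locbd_pos_add locbd_pos_mul locbd_pos_sqr
  locbd_pos_archi locbd_natr_inv).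
split=> bounded n n_gt0; have [lo hi] := bounded n n_gt0.
  by split; [apply/locbd_pos_1B | apply/locbd_pos_1D].
by split; [apply/locbd_pos_1B | apply/locbd_pos_1D].
Qed.

Definition char_of_locbd (F : locbd -> R) (r s : A) : R :=
  match pselect (bdpair (r, s)) with left h => F (to_locbd h) | right _ => R0 end.

Lemma char_of_locbdE F r s (h : bdpair (r, s)) : char_of_locbd F r s = F (to_locbd h).
Proof. by rewrite /char_of_locbd; case: pselect => [h'|//]; congr F; exact: to_locbd_eq. Qed.

Lemma character_char_of_locbd F : pos_char locbd_pos F -> character le (char_of_locbd F).
Proof.
move=> [F_add [F_mul [F1 F_pos]]].
split; first by move=> r s nb; rewrite /char_of_locbd; case: pselect.
split.
  move=> r s r' s' h h' rs'.
  have {}h : bdpair (r, s) := h; have {}h' : bdpair (r', s') := h'.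
  rewrite (char_of_locbdE F h) (char_of_locbdE F h').
  by congr F; exact: to_locbd_eq.
split; first by rewrite (char_of_locbdE F (bdpair_natr 1)).
split.
  move=> r s r' s' h h'.
  have {}h : bdpair (r, s) := h; have {}h' : bdpair (r', s') := h'.
  rewrite (char_of_locbdE F (bdpair_add h h')).
  by rewrite (char_of_locbdE F h) (char_of_locbdE F h') -F_add to_locbdD.
split.
  move=> r s r' s' h h'.
  have {}h : bdpair (r, s) := h; have {}h' : bdpair (r', s') := h'.
  rewrite (char_of_locbdE F (bdpair_mul h h')).
  by rewrite (char_of_locbdE F h) (char_of_locbdE F h') -F_mul to_locbdM.
move=> r s h pr; have {}h : bdpair (r, s) := h.
by rewrite (char_of_locbdE F h); apply/F_pos/locbd_posE.
Qed.

Definition locbd_of_char (phi : A -> A -> R) (b : locbd) : R :=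
  phi (locbd_repr b).1 (locbd_repr b).2.

Lemma locbd_of_charE phi x (h : bdpair x) : character le phi ->
  locbd_of_char phi (to_locbd h) = phi x.1 x.2.
Proof.
move=> [_ [phi_wd _]].
exact: phi_wd (locbd_reprP _).1 h (frac_eq_repr h).
Qed.

Lemma pos_char_locbd_of_char phi : character le phi -> pos_char locbd_pos (locbd_of_char phi).
Proof.
move=> phi_char; have [_ [_ [phi1 [phi_add [phi_mul phi_pos]]]]] := phi_char.
split.
  elim/locbd_ind => x hx; elim/locbd_ind => y hy.
  by rewrite to_locbdD !locbd_of_charE //; exact: phi_add.
split.
  elim/locbd_ind => x hx; elim/locbd_ind => y hy.
  by rewrite to_locbdM !locbd_of_charE //; exact: phi_mul.
split; first by rewrite to_locbd1 locbd_of_charE.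
by elim/locbd_ind => x hx /locbd_posE px; rewrite locbd_of_charE //; exact: phi_pos.
Qed.

Lemma gelfand_kernel_vanish r s t (hrs : bdpair (r, s)) (Lt : Loc le t) :
  (forall phi, character le phi -> inO t phi -> inO s phi) ->
  (forall phi, character le phi -> inO t phi -> gelfand_comp r s phi = R0) ->
  forall F, pos_char locbd_pos F -> F (to_locbd hrs * to_locbd (bdpair_inv Lt)) = R0.
Proof.
move=> O_ts r_s0 F F_char; have [_ [F_mul [_ F_pos]]] := F_char.
rewrite F_mul.
have : Rle R0 (F (to_locbd (bdpair_inv Lt))) by apply/F_pos/locbd_posE/pos1.
case/Rle_lt_or_eq_dec => [Ft_pos|<-]; last by rewrite Rmult_0_r.
have phi_char := character_char_of_locbd F_char.
have Ot : inO t (char_of_locbd F) by rewrite /inO (char_of_locbdE F (bdpair_inv Lt)).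
have := O_ts _ phi_char Ot; have := r_s0 _ phi_char Ot.
rewrite /inO /gelfand_comp (char_of_locbdE F hrs) => /Rmult_integral [|->]; last first.
  by rewrite Rmult_0_l.
by move=> /Rinv_neq_0_compat; lra.
Qed.

Lemma gelfand_kernel_bounded r : in_gelfand_kernel le r ->
  exists s : A, pos s /\ forall n : nat, (0 < n)%N -> le (- s) (r *+ n) /\ le (r *+ n) s.
Proof.
move=> [s [hrs [t [Lt [O_ts r_s0]]]]]; have {}hrs : bdpair (r, s) := hrs.
have := gelfand_kernel_vanish hrs Lt O_ts r_s0; rewrite to_locbdM => /locbd_char_kernelE bounded.
have /bdpairE [Ls _] := hrs.
exists (s * t); split; first exact: pos_mul (Loc_pos Ls) (Loc_pos Lt).
move=> n n_gt0; have [lo hi] := bounded n n_gt0.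
by split; apply/le_pos; [move: hi | move: lo]; apply: pos_eq; rewrite /= mulr1; ring.
Qed.

Lemma bounded_gelfand_kernel r : localizable le ->
  (exists s : A, pos s /\ forall n : nat, (0 < n)%N -> le (- s) (r *+ n) /\ le (r *+ n) s) ->
  in_gelfand_kernel le r.
Proof.
move=> A_loc [s0 [_ r_bd]]; have [t [Lt [_ /le_pos s0t]]] := A_loc s0.
have bounded n : (0 < n)%N -> pos (t - r *+ n) /\ pos (t + r *+ n).
  move=> n_gt0; have [/le_pos lo /le_pos hi] := r_bd n n_gt0.
  by split; [move: (pos_add s0t hi) | move: (pos_add s0t lo)]; apply: pos_eq; ring.
have hrt : bdpair (r, t).
  have [lo hi] := bounded 1%N isT; rewrite mulr1n in lo hi.
  by apply/bdpairE; split => //; exists 1%N; rewrite mul1r.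
have /(locbd_char_kernelE hrt) F0 := bounded.
exists t; split => //; exists t; split => //; split => [//|phi phi_char _].
rewrite /gelfand_comp -(locbd_of_charE hrt phi_char) F0 ?Rmult_0_r //.
exact: pos_char_locbd_of_char.
Qed.

End BoundedFractions.

Local Open Scope ring_scope.

Theorem corollary28 (A : comPzRingType) (le : A -> A -> Prop)
  (Hpo : is_pocr le) (Hloc : localizable le)
  (HN : forall n : nat, (0 < n)%N -> Loc le (n%:R : A)) (r : A) :
  in_gelfand_kernel le r <->
  exists s : A, le 0 s /\
    forall n : nat, (0 < n)%N -> le (- s) (r *+ n) /\ le (r *+ n) s.
Proof.
split; first exact: gelfand_kernel_bounded.
exact: bounded_gelfand_kernel.
Qed.
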